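(* Let $S$ be an $L$-theory extending $I\Sigma_1$ such that for some $K\in\mathbb{N}$, $S$ proves: for all pairwise coprime $a,b,c$ with $a+b=c$ one has $c<K\,\mathrm{rad}(abc)^{1+1/3}$; and $S$ proves that the only $x,y,a,b>1$ with $x^a-y^b=1$ are $x=3,a=2,y=2,b=3$. Let $\langle \mathcal{B}, e\rangle$ be any model of $S + \mathrm{Exp}'$, with $\mathcal{A}$ a substructure of $\mathcal{B}$ satisfying $\mathrm{Pr}$ such that $e: B\times A\to B$. Then Catalan's conjecture for $e$ holds in $\langle \mathcal{B}, e\rangle$: if $x,y\in B$, $a,b\in A$, $x,y,a,b>1$ and $e(x,a)-e(y,b)=1$, then $x=3$, $a=2$, $y=2$, $b=3$.
   Context: $L = \langle 0,1,+,\cdot,\le\rangle$; $x^y$ denotes the exponential $\Delta_1$-definable in $I\Sigma_1$; $\mathrm{rad}(a)$ is the product of the distinct primes dividing $a$. Presburger arithmetic $\mathrm{Pr}$: $0 \ne z+1$; $x\neq 0 \to \exists z\,(x = z+1)$; $x+z=y+z\to x=y$; $x+0=x$; associativity and commutativity of $+$; $x\le y \leftrightarrow \exists z\,(x+z=y)$; for each standard $0<n$, $\exists y\,(ny \le x < n(y+1))$. $\mathrm{Exp}'$ consists of: (e0) there is an $L$-substructure $\mathcal{A}$ of $\mathcal{B}$ satisfying $\mathrm{Pr}$ with $e: B\times A\to B$; and for all $x\in B$, $y,z\in A$: (e1) $(x=1\vee y=0)\leftrightarrow e(x,y)=1$; (e2) $x\neq0\to e(x,y)\neq 0$; (e3)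 $e(x,1)=x$; (e4) $e(x,y+z)=e(x,y)e(x,z)$. *)

From Stdlib Require Import Arith.

Record Lstr := {
  dom  :> Type;
  zer  : dom;
  one  : dom;
  add  : dom -> dom -> dom;
  mul  : dom -> dom -> dom;
  le   : dom -> dom -> Prop }.

Inductive term : Type :=
  | tvar (i : nat) | tzero | tone | tadd (s t : term) | tmul (s t : term).

Inductive form : Type :=
  | feq  (s t : term) | fle (s t : term) | fbot
  | fimp (p q : form) | fand (p q : form) | f_or (p q : form)
  | fall (i : nat) (p : form)
  | fex  (i : nat) (p : form)
  | fball (i : nat) (t : term) (p : form)
  | fbex  (i : nat) (t : term) (p : form).

Definition upd {M : Lstr} (r : nat -> M) (i : nat) (d : M) : nat -> M :=
  fun j => if Nat.eqb j i then d else r j.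

Fixpoint eval (M : Lstr) (r : nat -> M) (t : term) : M :=
  match t with
  | tvar i => r i | tzero => zer M | tone => one M
  | tadd s u => add M (eval M r s) (eval M r u)
  | tmul s u => mul M (eval M r s) (eval M r u)
  end.

(* In a bounded quantifier the bound t is evaluated outside the binder. *)
Fixpoint sat (M : Lstr) (r : nat -> M) (p : form) : Prop :=
  match p with
  | feq s t => eval M r s = eval M r t
  | fle s t => le M (eval M r s) (eval M r t)
  | fbot => False
  | fimp p q => sat M r p -> sat M r q
  | fand p q => sat M r p /\ sat M r q
  | f_or p q => sat M r p \/ sat M r q
  | fall i p => forall d : M, sat M (upd r i d) p
  | fex i p => exists d : M, sat M (upd r i d) p
  | fball i t p => forall d : M, le M d (eval M r t) -> sat M (upd r i d) p
  | fbex i t p => exists d : M, le M d (eval M r t) /\ sat M (upd r i d) p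
  end.

Definition valid (M : Lstr) (p : form) : Prop := forall r : nat -> M, sat M r p.

Definition theory := form -> Prop.
Definition Model (S : theory) (M : Lstr) : Prop := forall p, S p -> valid M p.
(* "S proves p": by Goedel's completeness theorem, p holds in every model of S. *)
Definition Proves (S : theory) (p : form) : Prop :=
  forall M : Lstr, Model S M -> valid M p.

Inductive delta0 : form -> Prop :=
  | d0_eq s t : delta0 (feq s t)
  | d0_le s t : delta0 (fle s t)
  | d0_bot : delta0 fbot
  | d0_imp p q : delta0 p -> delta0 q -> delta0 (fimp p q)
  | d0_and p q : delta0 p -> delta0 q -> delta0 (fand p q)
  | d0_or p q : delta0 p -> delta0 q -> delta0 (f_or p q)
  | d0_ball i t p : delta0 p -> delta0 (fball i t p)
  | d0_bex i t p : delta0 p -> delta0 (fbex i t p).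

Inductive sigma1 : form -> Prop :=
  | s1_d0 p : delta0 p -> sigma1 p
  | s1_ex i p : sigma1 p -> sigma1 (fex i p).

Definition ISigma1 (M : Lstr) : Prop :=
  (forall x : M, add M x (one M) <> zer M) /\
  (forall x y : M, add M x (one M) = add M y (one M) -> x = y) /\
  (forall x : M, x <> zer M -> exists y : M, x = add M y (one M)) /\
  (forall x : M, add M x (zer M) = x) /\
  (forall x y : M, add M x (add M y (one M)) = add M (add M x y) (one M)) /\
  (forall x : M, mul M x (zer M) = zer M) /\
  (forall x y : M, mul M x (add M y (one M)) = add M (mul M x y) x) /\
  (forall x y : M, le M x y <-> exists z : M, add M x z = y) /\
  (forall (p : form) (i : nat) (r : nat -> M), sigma1 p ->
      sat M (upd r i (zer M)) p ->
      (forall d : M, sat M (upd r i d) p -> sat M (upd r i (add M d (one M))) p) ->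
      forall d : M, sat M (upd r i d) p).

Definition ExtendsISigma1 (S : theory) : Prop :=
  forall M : Lstr, Model S M -> ISigma1 M.

Fixpoint tnum (n : nat) : term :=
  match n with 0 => tzero | S n => tadd (tnum n) tone end.

Definition f_lt (s t : term) : form := fand (fle s t) (fimp (feq s t) fbot).

(* d | u  (k fresh) *)
Definition f_dvd (d u : term) (k : nat) : form :=
  fbex k u (feq (tmul d (tvar k)) u).

(* gcd(u,v) = 1, for u > 0  (k1, k2 fresh) *)
Definition f_coprime (u v : term) (k1 k2 : nat) : form :=
  fball k1 u (fimp (fand (f_dvd (tvar k1) u k2) (f_dvd (tvar k1) v k2))
                   (feq (tvar k1) tone)).

Definition f_prime (p : term) (k1 k2 : nat) : form :=
  fand (f_lt tone p)
       (fball k1 p (fimp (f_dvd (tvar k1) p k2)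
                         (f_or (feq (tvar k1) tone) (feq (tvar k1) p)))).

Definition f_squarefree (r : term) (k1 k2 : nat) : form :=
  fball k1 r (fimp (f_dvd (tmul (tvar k1) (tvar k1)) r k2) (feq (tvar k1) tone)).

(* r = rad(n), for n > 0: r squarefree, r | n, every prime divisor of n divides r *)
Definition f_rad (n r : term) (k1 k2 k3 : nat) : form :=
  fand (f_squarefree r k1 k2)
   (fand (f_dvd r n k1)
     (fball k1 n (fimp (fand (f_prime (tvar k1) k2 k3) (f_dvd (tvar k1) n k2))
                       (f_dvd (tvar k1) r k2)))).

(* w = u mod m  (k fresh) *)
Definition f_rem (u m w : term) (k : nat) : form :=
  fand (fbex k u (feq u (tadd (tmul (tvar k) m) w))) (f_lt w m).

(* Goedel's beta-function modulus 1 + (i+1) v *)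
Definition beta_mod (i v : term) : term := tadd tone (tmul (tadd i tone) v).

(* z = x^y, the standard Sigma_1 (Delta_1 in I Sigma_1) definition of
   exponentiation through Goedel's beta function:
   exists u v, beta(u,v,0) = 1 /\ (forall i < y, beta(u,v,i+1) = beta(u,v,i)*x)
               /\ beta(u,v,y) = z.   (u v i w1 w2 k fresh) *)
Definition f_exp (x y z : term) (u v i w1 w2 k : nat) : form :=
  fex u (fex v (fand (f_rem (tvar u) (beta_mod tzero (tvar v)) tone k)
   (fand (fball i y (fimp (f_lt (tvar i) y)
           (fbex w1 (tvar u) (fbex w2 (tvar u)
             (fand (f_rem (tvar u) (beta_mod (tvar i) (tvar v)) (tvar w1) k)
              (fand (f_rem (tvar u) (beta_mod (tadd (tvar i) tone) (tvar v)) (tvar w2) k)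
                    (feq (tvar w2) (tmul (tvar w1) x))))))))
         (f_rem (tvar u) (beta_mod y (tvar v)) z k)))).

(* abc with exponent 1+1/3 and constant K:
   forall a b c r, a>0 /\ b>0 /\ a+b=c /\ a,b,c pairwise coprime /\ r = rad(abc)
                   -> c^3 < K^3 * r^4     (i.e. c < K rad(abc)^(4/3)) *)
Definition abc_sentence (K : nat) : form :=
  let a := tvar 0 in let b := tvar 1 in let c := tvar 2 in let r := tvar 3 in
  fall 0 (fall 1 (fall 2 (fall 3
   (fimp (fand (f_lt tzero a) (fand (f_lt tzero b) (fand (feq (tadd a b) c)
          (fand (f_coprime a b 10 11) (fand (f_coprime a c 10 11)
          (fand (f_coprime b c 10 11) (f_rad (tmul (tmul a b) c) r 10 11 12)))))))
         (f_lt (tmul (tmul c c) c)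
               (tmul (tnum (K * K * K)) (tmul (tmul (tmul r r) r) r))))))).

Definition catalan_sentence : form :=
  let x := tvar 0 in let y := tvar 1 in let a := tvar 2 in let b := tvar 3 in
  let z := tvar 4 in let w := tvar 5 in
  fall 0 (fall 1 (fall 2 (fall 3 (fall 4 (fall 5
   (fimp (fand (f_lt tone x) (fand (f_lt tone y) (fand (f_lt tone a) (fand (f_lt tone b)
          (fand (f_exp x a z 10 11 12 13 14 15) (fand (f_exp y b w 10 11 12 13 14 15)
                (feq z (tadd w tone))))))))
         (fand (feq x (tnum 3)) (fand (feq a (tnum 2))
               (fand (feq y (tnum 2)) (feq b (tnum 3))))))))))).

Definition ltB (M : Lstr) (x y : M) : Prop := le M x y /\ x <> y.

Fixpoint nsum (M : Lstr) (n : nat) (y : M) : M :=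
  match n with 0 => zer M | S n => add M (nsum M n y) y end.

Definition PrSubstructure (B : Lstr) (inA : B -> Prop) : Prop :=
  inA (zer B) /\ inA (one B) /\
  (forall x y, inA x -> inA y -> inA (add B x y)) /\
  (forall x y, inA x -> inA y -> inA (mul B x y)) /\
  (forall z, inA z -> zer B <> add B z (one B)) /\
  (forall x, inA x -> x <> zer B -> exists z, inA z /\ x = add B z (one B)) /\
  (forall x y z, inA x -> inA y -> inA z -> add B x z = add B y z -> x = y) /\
  (forall x, inA x -> add B x (zer B) = x) /\
  (forall x y z, inA x -> inA y -> inA z -> add B (add B x y) z = add B x (add B y z)) /\
  (forall x y, inA x -> inA y -> add B x y = add B y x) /\
  (forall x y, inA x -> inA y -> (le B x y <-> exists z, inA z /\ add B x z = y)) /\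
  (forall n : nat, 0 < n -> forall x, inA x ->
     exists y, inA y /\ le B (nsum B n y) x /\ ltB B x (nsum B n (add B y (one B)))).

(* Exp' for <B, e>, with e : B x A -> B (values of e at second arguments
   outside A are irrelevant) *)
Definition ExpPrime (B : Lstr) (inA : B -> Prop) (e : B -> B -> B) : Prop :=
  PrSubstructure B inA /\
  (forall x y, inA y -> (x = one B \/ y = zer B) <-> e x y = one B) /\
  (forall x y, inA y -> x <> zer B -> e x y <> zer B) /\
  (forall x, e x (one B) = x) /\
  (forall x y z, inA y -> inA z -> e x (add B y z) = mul B (e x y) (e x z)).

Definition two (B : Lstr) : B := add B (one B) (one B).
Definition three (B : Lstr) : B := add B (two B) (one B).

Definition CatalanFor (B : Lstr) (inA : B -> Prop) (e : B -> B -> B) : Prop :=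
  forall x y a b : B, inA a -> inA b ->
    ltB B (one B) x -> ltB B (one B) y -> ltB B (one B) a -> ltB B (one B) b ->
    e x a = add B (e y b) (one B) ->
    x = three B /\ a = two B /\ y = two B /\ b = three B.

From Stdlib Require Import Bool Arith Lia Ring FunctionalExtensionality Classical.

(* For a standard exponent m, e(x, m) is the ordinary
   power x^m, which the Sigma_1 exponentiation formula (Goedel's beta function) defines, so when
   both exponents are standard the Catalan sentence of S applies. A nonstandard exponent s in the
   Presburger part A can be written s = 16 q + j with q > K^3; then e(g, s) = X^16 g^j for
   X = e(g, q), and C = X g carries every prime divisor of e(g, s) while K^3 C^4 <= e(g, s).
   Applied to e(y, b) + 1 = e(x, a), the abc sentence then gives the contradiction
   e(x, a)^3 < K^3 rad^4 <= e(x, a)^3. *)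

Fixpoint term_mentions (n : nat) (t : term) : bool :=
  match t with
  | tvar i => Nat.eqb i n
  | tadd s u | tmul s u => term_mentions n s || term_mentions n u
  | _ => false
  end.

Fixpoint form_mentions (n : nat) (p : form) : bool :=
  match p with
  | feq s t | fle s t => term_mentions n s || term_mentions n t
  | fbot => false
  | fimp p q | fand p q | f_or p q => form_mentions n p || form_mentions n q
  | fall i p | fex i p => Nat.eqb i n || form_mentions n p
  | fball i t p | fbex i t p => Nat.eqb i n || term_mentions n t || form_mentions n p
  end.

Lemma upd_same {M : Lstr} (r : nat -> M) i d : upd r i d i = d.
Proof. unfold upd. now rewrite Nat.eqb_refl. Qed.

Lemma upd_comm {M : Lstr} (r : nat -> M) i j a b : i <> j ->
  upd (upd r i a) j b = upd (upd r j b) i a.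
Proof.
  intro Hij. apply functional_extensionality. intro k. unfold upd.
  destruct (Nat.eqb_spec k j), (Nat.eqb_spec k i); congruence.
Qed.

Lemma eval_upd_unmentioned {M : Lstr} (r : nat -> M) n d t :
  term_mentions n t = false -> eval M (upd r n d) t = eval M r t.
Proof.
  induction t; simpl; intro H; auto.
  - unfold upd. now rewrite H.
  - apply orb_false_iff in H as [H1 H2]. now rewrite IHt1, IHt2.
  - apply orb_false_iff in H as [H1 H2]. now rewrite IHt1, IHt2.
Qed.

Lemma sat_upd_unmentioned {M : Lstr} n d p : form_mentions n p = false ->
  forall r : nat -> M, sat M (upd r n d) p <-> sat M r p.
Proof.
  induction p; simpl; intros H r;
    repeat match goal with H : _ || _ = false |- _ => apply orb_false_iff in H as [? ?] end;
    try (apply Nat.eqb_neq in H);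
    rewrite ?eval_upd_unmentioned by assumption.
  1-3: tauto.
  1-3: rewrite IHp1, IHp2 by assumption; tauto.
  all: split.
  - intros G d'. specialize (G d'). rewrite upd_comm in G by lia. now apply IHp.
  - intros G d'. rewrite upd_comm by lia. apply IHp; auto.
  - intros [d' G]. exists d'. rewrite upd_comm in G by lia. now apply IHp.
  - intros [d' G]. exists d'. rewrite upd_comm by lia. now apply IHp.
  - intros G d' Hd. specialize (G d' Hd). rewrite upd_comm in G by lia. now apply IHp.
  - intros G d' Hd. rewrite upd_comm by lia. apply IHp; auto.
  - intros [d' [Hd G]]. exists d'. split; [exact Hd|]. rewrite upd_comm in G by lia. now apply IHp.
  - intros [d' [Hd G]]. exists d'. split; [exact Hd|]. rewrite upd_comm by lia. now apply IHp.
Qed.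

Section ISigma1Model.

Variable M : Lstr.
Hypothesis HM : ISigma1 M.

Local Infix "⊕" := (add M) (at level 50, left associativity).
Local Infix "⊗" := (mul M) (at level 40, left associativity).
Local Notation "0'" := (zer M).
Local Notation "1'" := (one M).
Local Notation "x ≤ y" := (le M x y) (at level 70).
Local Notation "x < y" := (ltB M x y) (at level 70).

Lemma succ_neq_0 x : x ⊕ 1' <> 0'.
Proof. destruct HM as [H _]; auto. Qed.

Lemma succ_inj x y : x ⊕ 1' = y ⊕ 1' -> x = y.
Proof. destruct HM as [_ [H _]]; auto. Qed.

Lemma neq_0_succ x : x <> 0' -> exists y, x = y ⊕ 1'.
Proof. destruct HM as [_ [_ [H _]]]; auto. Qed.

Lemma add_0_r x : x ⊕ 0' = x.
Proof. destruct HM as [_ [_ [_ [H _]]]]; auto. Qed.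

Lemma add_succ_r x y : x ⊕ (y ⊕ 1') = (x ⊕ y) ⊕ 1'.
Proof. destruct HM as [_ [_ [_ [_ [H _]]]]]; auto. Qed.

Lemma mul_0_r x : x ⊗ 0' = 0'.
Proof. destruct HM as [_ [_ [_ [_ [_ [H _]]]]]]; auto. Qed.

Lemma mul_succ_r x y : x ⊗ (y ⊕ 1') = x ⊗ y ⊕ x.
Proof. destruct HM as [_ [_ [_ [_ [_ [_ [H _]]]]]]]; auto. Qed.

Lemma le_exists_add x y : x ≤ y <-> exists z, x ⊕ z = y.
Proof. destruct HM as [_ [_ [_ [_ [_ [_ [_ [H _]]]]]]]]; auto. Qed.

Lemma sigma1_induction i (p : form) (r : nat -> M) (P : M -> Prop) : sigma1 p ->
  (forall d, sat M (upd r i d) p <-> P d) ->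
  P 0' -> (forall d, P d -> P (d ⊕ 1')) -> forall d, P d.
Proof.
  intros Hp HP H0 HS d. apply HP.
  destruct HM as [_ [_ [_ [_ [_ [_ [_ [_ Hind]]]]]]]].
  apply Hind; [exact Hp | now apply HP |].
  intros d' Hd'. now apply HP, HS, HP.
Qed.

(* Inductions below are on x_0, with parameters x_1, x_2, x_3 := a, b, c. *)
Definition params (a b c : M) : nat -> M :=
  fun j => match j with 1 => a | 2 => b | 3 => c | _ => 0' end.

Ltac sigma1_ind p a b c :=
  refine (sigma1_induction 0 p (params a b c) _ _ _ _ _);
  [ repeat apply s1_ex; apply s1_d0; repeat constructor
  | intro; cbn; reflexivity | | ].

Lemma add_0_l x : 0' ⊕ x = x.
Proof.
  revert x. sigma1_ind (feq (tadd tzero (tvar 0)) (tvar 0)) 0' 0' 0'.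
  - apply add_0_r.
  - intros d H. now rewrite add_succ_r, H.
Qed.

Lemma add_succ_l x y : (x ⊕ 1') ⊕ y = (x ⊕ y) ⊕ 1'.
Proof.
  revert y.
  sigma1_ind (feq (tadd (tadd (tvar 1) tone) (tvar 0)) (tadd (tadd (tvar 1) (tvar 0)) tone)) x 0' 0'.
  - now rewrite !add_0_r.
  - intros d H. now rewrite !add_succ_r, H.
Qed.

Lemma add_comm x y : x ⊕ y = y ⊕ x.
Proof.
  revert y. sigma1_ind (feq (tadd (tvar 1) (tvar 0)) (tadd (tvar 0) (tvar 1))) x 0' 0'.
  - now rewrite add_0_r, add_0_l.
  - intros d H. now rewrite add_succ_r, H, add_succ_l.
Qed.

Lemma add_assoc x y z : x ⊕ (y ⊕ z) = (x ⊕ y) ⊕ z.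
Proof.
  revert z.
  sigma1_ind (feq (tadd (tvar 1) (tadd (tvar 2) (tvar 0)))
                  (tadd (tadd (tvar 1) (tvar 2)) (tvar 0))) x y 0'.
  - now rewrite !add_0_r.
  - intros d H. now rewrite !add_succ_r, H.
Qed.

Lemma mul_0_l x : 0' ⊗ x = 0'.
Proof.
  revert x. sigma1_ind (feq (tmul tzero (tvar 0)) tzero) 0' 0' 0'.
  - apply mul_0_r.
  - intros d H. now rewrite mul_succ_r, H, add_0_r.
Qed.

Lemma mul_succ_l x y : (x ⊕ 1') ⊗ y = x ⊗ y ⊕ y.
Proof.
  revert y.
  sigma1_ind (feq (tmul (tadd (tvar 1) tone) (tvar 0))
                  (tadd (tmul (tvar 1) (tvar 0)) (tvar 0))) x 0' 0'.
  - now rewrite !mul_0_r, add_0_r.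
  - intros d H. rewrite !mul_succ_r, H, !add_succ_r. f_equal.
    rewrite <- !add_assoc. f_equal. apply add_comm.
Qed.

Lemma mul_comm x y : x ⊗ y = y ⊗ x.
Proof.
  revert y. sigma1_ind (feq (tmul (tvar 1) (tvar 0)) (tmul (tvar 0) (tvar 1))) x 0' 0'.
  - now rewrite mul_0_r, mul_0_l.
  - intros d H. now rewrite mul_succ_r, H, mul_succ_l.
Qed.

Lemma mul_add_distr_l x y z : x ⊗ (y ⊕ z) = x ⊗ y ⊕ x ⊗ z.
Proof.
  revert z.
  sigma1_ind (feq (tmul (tvar 1) (tadd (tvar 2) (tvar 0)))
                  (tadd (tmul (tvar 1) (tvar 2)) (tmul (tvar 1) (tvar 0)))) x y 0'.
  - now rewrite add_0_r, mul_0_r, add_0_r.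
  - intros d H. now rewrite add_succ_r, !mul_succ_r, H, add_assoc.
Qed.

Lemma mul_assoc x y z : x ⊗ (y ⊗ z) = (x ⊗ y) ⊗ z.
Proof.
  revert z.
  sigma1_ind (feq (tmul (tvar 1) (tmul (tvar 2) (tvar 0)))
                  (tmul (tmul (tvar 1) (tvar 2)) (tvar 0))) x y 0'.
  - now rewrite !mul_0_r.
  - intros d H. now rewrite !mul_succ_r, mul_add_distr_l, H.
Qed.

Lemma mul_1_l x : 1' ⊗ x = x.
Proof. now rewrite <- (add_0_l 1'), mul_succ_l, mul_0_l, add_0_l. Qed.

Lemma model_semiring : semi_ring_theory 0' 1' (add M) (mul M) (@eq M).
Proof.
  constructor; intros.
  - apply add_0_l.
  - apply add_comm.
  - apply add_assoc.
  - apply mul_1_l.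
  - apply mul_0_l.
  - apply mul_comm.
  - apply mul_assoc.
  - now rewrite mul_comm, mul_add_distr_l, !(mul_comm p).
Qed.

Add Ring model_ring : model_semiring.

Lemma add_cancel_r x y z : x ⊕ z = y ⊕ z -> x = y.
Proof.
  revert z.
  sigma1_ind (fimp (feq (tadd (tvar 1) (tvar 0)) (tadd (tvar 2) (tvar 0)))
                   (feq (tvar 1) (tvar 2))) x y 0'.
  - now rewrite !add_0_r.
  - intros d H E. rewrite !add_succ_r in E. now apply H, succ_inj.
Qed.

Lemma add_cancel_l x y z : z ⊕ x = z ⊕ y -> x = y.
Proof. rewrite !(add_comm z). apply add_cancel_r. Qed.

Lemma add_eq_0 x y : x ⊕ y = 0' -> x = 0' /\ y = 0'.
Proof.
  intro H. destruct (classic (y = 0')) as [Hy|Hy].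
  - subst. now rewrite add_0_r in H.
  - destruct (neq_0_succ _ Hy) as [y' ->]. rewrite add_succ_r in H.
    now destruct (succ_neq_0 _ H).
Qed.

Lemma one_neq_0 : 1' <> 0'.
Proof. rewrite <- (add_0_l 1'). apply succ_neq_0. Qed.

Lemma le_refl x : x ≤ x.
Proof. apply le_exists_add. exists 0'. apply add_0_r. Qed.

Lemma le_add_r x y : x ≤ x ⊕ y.
Proof. apply le_exists_add. eauto. Qed.

Lemma le_add_l x y : x ≤ y ⊕ x.
Proof. rewrite add_comm. apply le_add_r. Qed.

Lemma le_0_l x : 0' ≤ x.
Proof. apply le_exists_add. exists x. apply add_0_l. Qed.

Lemma le_trans x y z : x ≤ y -> y ≤ z -> x ≤ z.
Proof.
  intros [a <-]%le_exists_add [b <-]%le_exists_add.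
  apply le_exists_add. exists (a ⊕ b). ring.
Qed.

Lemma le_antisym x y : x ≤ y -> y ≤ x -> x = y.
Proof.
  intros [a <-]%le_exists_add [b Hb]%le_exists_add.
  assert (Hab : a ⊕ b = 0').
  { apply (add_cancel_l _ _ x). rewrite add_0_r. rewrite <- Hb at 2. ring. }
  apply add_eq_0 in Hab as [-> _]. symmetry. apply add_0_r.
Qed.

Lemma le_0_r x : x ≤ 0' -> x = 0'.
Proof. intro H. apply le_antisym; [exact H | apply le_0_l]. Qed.

Lemma le_succ_r x y : x ≤ y ⊕ 1' -> x ≤ y \/ x = y ⊕ 1'.
Proof.
  intros [k E]%le_exists_add. destruct (classic (k = 0')) as [->|Hk].
  - right. now rewrite add_0_r in E.
  - destruct (neq_0_succ _ Hk) as [k' ->]. left. apply le_exists_add. exists k'.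
    apply succ_inj. rewrite <- E. ring.
Qed.

Lemma le_total x y : x ≤ y \/ y ≤ x.
Proof.
  enough (H : forall y, (exists k, k ≤ y /\ x ⊕ k = y) \/ (exists k, k ≤ x /\ y ⊕ k = x)).
  { destruct (H y) as [[k [_ E]]|[k [_ E]]]; [left|right]; apply le_exists_add; eauto. }
  sigma1_ind (f_or (fbex 2 (tvar 0) (feq (tadd (tvar 1) (tvar 2)) (tvar 0)))
                   (fbex 2 (tvar 1) (feq (tadd (tvar 0) (tvar 2)) (tvar 1)))) x 0' 0'.
  - right. exists x. split; [apply le_refl | apply add_0_l].
  - intros d [[k [Hk E]]|[k [Hk E]]].
    + left. exists (k ⊕ 1'). split.
      * destruct (proj1 (le_exists_add _ _) Hk) as [z Hz].
        apply le_exists_add. exists z. rewrite <- Hz. ring.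
      * rewrite <- E. ring.
    + destruct (classic (k = 0')) as [->|Hk0].
      * left. exists 1'. split; [apply le_add_l|]. rewrite add_0_r in E. now rewrite E.
      * destruct (neq_0_succ _ Hk0) as [k' ->]. right. exists k'. split.
        -- eapply le_trans; [apply le_add_r | exact Hk].
        -- rewrite <- E. ring.
Qed.

Lemma lt_succ_l x y : x < y <-> x ⊕ 1' ≤ y.
Proof.
  split.
  - intros [[k E]%le_exists_add Hxy]. destruct (classic (k = 0')) as [->|Hk].
    + now rewrite add_0_r in E.
    + destruct (neq_0_succ _ Hk) as [k' ->]. apply le_exists_add. exists k'. rewrite <- E. ring.
  - intros [k E]%le_exists_add. split.
    + apply le_exists_add. exists (1' ⊕ k). rewrite <- E. ring.
    + intros <-. assert (Hk : (k ⊕ 1') = 0').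
      { apply (add_cancel_l _ _ x). rewrite add_0_r. rewrite <- E at 2. ring. }
      exact (succ_neq_0 _ Hk).
Qed.

Lemma lt_le x y : x < y -> x ≤ y.
Proof. now intros [H _]. Qed.

Lemma lt_not_le x y : x < y -> ~ y ≤ x.
Proof. intros [H1 H2] H3. apply H2. now apply le_antisym. Qed.

Lemma not_lt x y : ~ x < y -> y ≤ x.
Proof.
  intro H. destruct (le_total x y) as [H1|H1]; [|exact H1].
  destruct (classic (x = y)) as [->|Hxy]; [apply le_refl|].
  exfalso. now apply H.
Qed.

Lemma lt_succ_r x y : x < y ⊕ 1' -> x ≤ y.
Proof.
  intros [k E]%lt_succ_l%le_exists_add. apply le_exists_add. exists k.
  apply succ_inj. rewrite <- E. ring.
Qed.

Lemma neq_0_ge_1 x : x <> 0' -> 1' ≤ x.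
Proof. intros [y ->]%neq_0_succ. apply le_add_l. Qed.

Lemma ge_1_neq_0 x : 1' ≤ x -> x <> 0'.
Proof. intros H ->. now apply one_neq_0, le_0_r. Qed.

Lemma gt_1_neq_0 x : 1' < x -> x <> 0'.
Proof. intros H ->. exact (lt_not_le _ _ H (le_0_l _)). Qed.

Lemma add_le_mono a b c d : a ≤ b -> c ≤ d -> a ⊕ c ≤ b ⊕ d.
Proof.
  intros [k <-]%le_exists_add [l <-]%le_exists_add.
  apply le_exists_add. exists (k ⊕ l). ring.
Qed.

Lemma le_lt_succ x y : x ≤ y -> x < y ⊕ 1'.
Proof. intro H. apply lt_succ_l, add_le_mono; [exact H | apply le_refl]. Qed.

Lemma add_le_cancel_r a b c : a ⊕ c ≤ b ⊕ c -> a ≤ b.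
Proof.
  intros [k E]%le_exists_add. apply le_exists_add. exists k.
  apply (add_cancel_r _ _ c). rewrite <- E. ring.
Qed.

Lemma mul_le_mono a b c d : a ≤ b -> c ≤ d -> a ⊗ c ≤ b ⊗ d.
Proof.
  intros [k <-]%le_exists_add [l <-]%le_exists_add.
  apply le_exists_add. exists (a ⊗ l ⊕ k ⊗ c ⊕ k ⊗ l). ring.
Qed.

Lemma mul_lt_mono_r x y z : z <> 0' -> x < y -> x ⊗ z < y ⊗ z.
Proof.
  intros Hz H%lt_succ_l. apply lt_succ_l, le_trans with ((x ⊕ 1') ⊗ z).
  - rewrite mul_succ_l. apply add_le_mono; [apply le_refl | now apply neq_0_ge_1].
  - apply mul_le_mono; [exact H | apply le_refl].
Qed.

Lemma mul_le_cancel_r x y z : z <> 0' -> x ⊗ z ≤ y ⊗ z -> x ≤ y.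
Proof.
  intros Hz H. apply not_lt. intro H'.
  exact (lt_not_le _ _ (mul_lt_mono_r _ _ _ Hz H') H).
Qed.

Lemma mul_eq_0 x y : x ⊗ y = 0' -> x = 0' \/ y = 0'.
Proof.
  intro H. destruct (classic (x = 0')) as [|Hx]; [now left|].
  destruct (classic (y = 0')) as [|Hy]; [now right|].
  destruct (neq_0_succ _ Hx) as [x' ->], (neq_0_succ _ Hy) as [y' ->].
  exfalso. apply (succ_neq_0 (x' ⊗ y' ⊕ x' ⊕ y')). rewrite <- H. ring.
Qed.

Lemma mul_neq_0 x y : x <> 0' -> y <> 0' -> x ⊗ y <> 0'.
Proof. intros Hx Hy [|]%mul_eq_0; auto. Qed.

Lemma le_mul_r x y : y <> 0' -> x ≤ x ⊗ y.
Proof.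
  intro Hy. rewrite <- (mul_1_l x) at 1. rewrite (mul_comm 1').
  apply mul_le_mono; [apply le_refl | now apply neq_0_ge_1].
Qed.

Lemma lt_0_1 : 0' < 1'.
Proof. split; [apply le_0_l | intro H; now apply one_neq_0]. Qed.

Fixpoint num (n : nat) : M :=
  match n with 0 => 0' | S n => num n ⊕ 1' end.

Lemma eval_tnum r n : eval M r (tnum n) = num n.
Proof. induction n; simpl; congruence. Qed.

Lemma num_add a b : num (a + b) = num a ⊕ num b.
Proof. induction a; simpl; [now rewrite add_0_l | rewrite IHa; ring]. Qed.

Lemma num_mul a b : num (a * b) = num a ⊗ num b.
Proof. induction a; simpl; [now rewrite mul_0_l | rewrite num_add, IHa; ring]. Qed.

Lemma num_1 : num 1 = 1'.
Proof. apply add_0_l. Qed.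

Lemma num_2 : num 2 = two M.
Proof. cbn [num two]. now rewrite add_0_l. Qed.

Lemma num_3 : num 3 = three M.
Proof. change (num 2 ⊕ 1' = two M ⊕ 1'). now rewrite num_2. Qed.

Lemma num_le a b : (a <= b)%nat -> num a ≤ num b.
Proof. intro H. replace b with (a + (b - a))%nat by lia. rewrite num_add. apply le_add_r. Qed.

Lemma num_lt a b : (a < b)%nat -> num a < num b.
Proof. intro H. apply lt_succ_l. exact (num_le (S a) b H). Qed.

Lemma num_le_inv a b : num a ≤ num b -> (a <= b)%nat.
Proof.
  intro H. destruct (le_gt_dec a b) as [|Hba]; [assumption|].
  now destruct (lt_not_le _ _ (num_lt b a Hba)).
Qed.

Lemma le_num x n : x ≤ num n -> exists m, (m <= n)%nat /\ x = num m.
Proof.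
  revert x. induction n as [|n IH]; intros x H.
  - exists 0%nat. split; [lia | now apply le_0_r].
  - destruct (le_succ_r _ _ H) as [H'| ->].
    + destruct (IH _ H') as [m [Hm ->]]. exists m. split; [lia | reflexivity].
    + now exists (S n).
Qed.

Lemma lt_num x n : x < num n -> exists m, (m < n)%nat /\ x = num m.
Proof.
  destruct n as [|n]; intro H.
  - now destruct (lt_not_le _ _ H (le_0_l _)).
  - destruct (le_num _ _ (lt_succ_r _ _ H)) as [m [Hm ->]]. exists m. split; [lia | reflexivity].
Qed.

Lemma nsum_num_mul n y : nsum M n y = num n ⊗ y.
Proof. induction n; simpl; [now rewrite mul_0_l | rewrite IHn; ring]. Qed.

Fixpoint pow (x : M) (n : nat) : M :=
  match n with 0 => 1' | S n => pow x n ⊗ x end.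

Lemma pow_1 x : pow x 1 = x.
Proof. apply mul_1_l. Qed.

Lemma pow_add_r x a b : pow x (a + b) = pow x a ⊗ pow x b.
Proof. induction a; simpl; [ring | rewrite IHa; ring]. Qed.

Lemma pow_mul_l x y n : pow (x ⊗ y) n = pow x n ⊗ pow y n.
Proof. induction n; simpl; [ring | rewrite IHn; ring]. Qed.

Lemma pow_neq_0 x n : x <> 0' -> pow x n <> 0'.
Proof. intro Hx. induction n; simpl; [apply one_neq_0 | now apply mul_neq_0]. Qed.

Lemma pow_le_mono_r x a b : x <> 0' -> (a <= b)%nat -> pow x a ≤ pow x b.
Proof.
  intros Hx H. replace b with (a + (b - a))%nat by lia. rewrite pow_add_r.
  now apply le_mul_r, pow_neq_0.
Qed.

Lemma pow_le_mono_l x y n : x ≤ y -> pow x n ≤ pow y n.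
Proof. intro H. induction n; simpl; [apply le_refl | now apply mul_le_mono]. Qed.

Lemma num_lt_pow x n : 1' < x -> num n < pow x n.
Proof.
  intro Hx. induction n as [|n IH]; simpl; [apply lt_0_1|].
  apply lt_succ_l in IH. apply lt_succ_l in Hx. apply lt_succ_l.
  apply le_trans with (pow x n ⊗ (1' ⊕ 1')); [|apply mul_le_mono; [apply le_refl | exact Hx]].
  replace (pow x n ⊗ (1' ⊕ 1')) with (pow x n ⊕ pow x n) by ring.
  apply add_le_mono; [exact IH|].
  apply neq_0_ge_1, pow_neq_0, gt_1_neq_0, lt_succ_l, Hx.
Qed.

Definition dvd (d u : M) : Prop := exists k, d ⊗ k = u.

Lemma dvd_refl x : dvd x x.
Proof. exists 1'. ring. Qed.

Lemma dvd_trans a b c : dvd a b -> dvd b c -> dvd a c.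
Proof. intros [k <-] [l <-]. exists (k ⊗ l). ring. Qed.

Lemma dvd_mul_r a b c : dvd a b -> dvd a (b ⊗ c).
Proof. intros [k <-]. exists (k ⊗ c). ring. Qed.

Lemma dvd_mul_l a b c : dvd a b -> dvd a (c ⊗ b).
Proof. rewrite mul_comm. apply dvd_mul_r. Qed.

Lemma dvd_0 a : dvd a 0'.
Proof. exists 0'. ring. Qed.

Lemma dvd_le d u : dvd d u -> u <> 0' -> d ≤ u.
Proof. intros [k <-] Hu. apply le_mul_r. intros ->. apply Hu. ring. Qed.

Lemma dvd_add_cancel_l p a b : dvd p (a ⊕ b) -> dvd p a -> dvd p b.
Proof.
  intros [k Hk] [j Hj]. destruct (classic (p = 0')) as [->|Hp].
  - rewrite mul_0_l in Hk. symmetry in Hk. apply add_eq_0 in Hk as [_ ->]. apply dvd_0.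
  - assert (Hjk : j ≤ k).
    { apply (mul_le_cancel_r _ _ p Hp). rewrite !(mul_comm _ p), Hj, Hk. apply le_add_r. }
    destruct (proj1 (le_exists_add _ _) Hjk) as [l <-]. exists l.
    apply (add_cancel_l _ _ (p ⊗ j)). now rewrite <- mul_add_distr_l, Hk, Hj.
Qed.

Lemma dvd_1 d : dvd d 1' -> d = 1'.
Proof.
  intros [k Hk].
  assert (Hd : d <> 0') by (intros ->; rewrite mul_0_l in Hk; now apply one_neq_0).
  assert (Hk0 : k <> 0') by (intros ->; rewrite mul_0_r in Hk; now apply one_neq_0).
  apply le_antisym; [rewrite <- Hk; now apply le_mul_r | now apply neq_0_ge_1].
Qed.

Lemma div_mod u m : m <> 0' -> exists q r, u = q ⊗ m ⊕ r /\ r < m.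
Proof.
  intro Hm. revert u.
  sigma1_ind (fex 2 (fex 3 (fand (feq (tvar 0) (tadd (tmul (tvar 2) (tvar 1)) (tvar 3)))
                                 (f_lt (tvar 3) (tvar 1))))) m 0' 0'.
  - exists 0', 0'. split; [ring | split; [apply le_0_l | auto]].
  - intros d [q [r [-> Hr%lt_succ_l]]]. destruct (classic (r ⊕ 1' = m)) as [Hrm|Hrm].
    + exists (q ⊕ 1'), 0'. split; [rewrite <- Hrm; ring | split; [apply le_0_l | auto]].
    + exists q, (r ⊕ 1'). split; [ring | split; auto].
Qed.

(* Sigma_1-induction on x_9 for the Delta_0 formula "no x_0 <= x_9 satisfies p". *)
Lemma delta0_least_number (p : form) (r : nat -> M) (P : M -> Prop) :
  delta0 p -> form_mentions 9 p = false ->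
  (forall d, sat M (upd r 0 d) p <-> P d) -> (exists d, P d) ->
  exists d, P d /\ forall d', d' < d -> ~ P d'.
Proof.
  intros Hp Hp9 HP [d0 Hd0]. apply NNPP. intro Hnone.
  enough (H : forall n d, d ≤ n -> ~ P d) by exact (H d0 d0 (le_refl _) Hd0).
  refine (sigma1_induction 9 (fball 0 (tvar 9) (fimp p fbot)) r _ _ _ _ _).
  - now repeat constructor.
  - intro n. cbn [sat eval]. rewrite upd_same.
    split; intros G d Hdn HPd; apply (G d Hdn).
    + rewrite upd_comm by lia. apply sat_upd_unmentioned; [exact Hp9|]. now apply HP.
    + rewrite upd_comm in HPd by lia. apply sat_upd_unmentioned in HPd; [|exact Hp9]. now apply HP.
  - intros d Hd HPd. apply le_0_r in Hd. subst. apply Hnone. exists 0'.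
    split; [exact HPd|]. intros d' Hd'. now destruct (lt_not_le _ _ Hd' (le_0_l _)).
  - intros n IH d Hdn HPd. destruct (le_succ_r _ _ Hdn) as [H | ->]; [exact (IH d H HPd)|].
    apply Hnone. exists (n ⊕ 1'). split; [exact HPd|].
    intros d' Hd'. now apply IH, lt_succ_r.
Qed.

Definition is_prime (p : M) : Prop :=
  1' < p /\ forall k, k ≤ p -> dvd k p -> k = 1' \/ k = p.
Definition coprime (u v : M) : Prop :=
  forall d, d ≤ u -> dvd d u -> dvd d v -> d = 1'.
Definition squarefree (r : M) : Prop :=
  forall k, k ≤ r -> dvd (k ⊗ k) r -> k = 1'.
Definition is_rad (n r : M) : Prop :=
  squarefree r /\ dvd r n /\ forall p, p ≤ n -> is_prime p /\ dvd p n -> dvd p r.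

Lemma sat_f_lt r s t : sat M r (f_lt s t) <-> eval M r s < eval M r t.
Proof. reflexivity. Qed.

Lemma dvd_bounded d u : dvd d u <-> exists k, k ≤ u /\ d ⊗ k = u.
Proof.
  split; [|intros [k [_ Hk]]; now exists k].
  intros [k Hk]. destruct (classic (u = 0')) as [->|Hu].
  - exists 0'. split; [apply le_refl | apply mul_0_r].
  - exists k. split; [|exact Hk]. rewrite <- Hk, mul_comm. apply le_mul_r.
    intros ->. apply Hu. rewrite <- Hk. ring.
Qed.

Lemma sat_f_dvd r d u k : term_mentions k d = false -> term_mentions k u = false ->
  (sat M r (f_dvd d u k) <-> dvd (eval M r d) (eval M r u)).
Proof.
  intros Hd Hu. unfold f_dvd. simpl. rewrite dvd_bounded.
  split; intros [x [Hx Ex]]; exists x; rewrite !eval_upd_unmentioned, upd_same in *; auto.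
Qed.

Lemma sat_f_prime r t k1 k2 : Nat.eqb k1 k2 = false ->
  term_mentions k1 t = false -> term_mentions k2 t = false ->
  (sat M r (f_prime t k1 k2) <-> is_prime (eval M r t)).
Proof.
  intros H12 H1 H2. unfold f_prime, is_prime. cbn [sat]. rewrite sat_f_lt. cbn [eval].
  assert (Et : forall x, eval M (upd r k1 x) t = eval M r t) by (intro; now apply eval_upd_unmentioned).
  assert (D : forall x, sat M (upd r k1 x) (f_dvd (tvar k1) t k2) <-> dvd x (eval M r t)).
  { intro x. rewrite sat_f_dvd by (simpl; first [assumption | now rewrite Nat.eqb_sym]).
    cbn [eval]. now rewrite upd_same, Et. }
  split; intros [Ha Hb]; split; auto; intros k Hk; specialize (Hb k Hk); cbn [eval] in *;
    rewrite ?D, ?upd_same, ?Et in *; auto.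
Qed.

Lemma sat_f_coprime r u v k1 k2 : Nat.eqb k1 k2 = false ->
  term_mentions k1 u = false -> term_mentions k2 u = false ->
  term_mentions k1 v = false -> term_mentions k2 v = false ->
  (sat M r (f_coprime u v k1 k2) <-> coprime (eval M r u) (eval M r v)).
Proof.
  intros H12 H1 H2 H3 H4. unfold f_coprime, coprime. cbn [sat].
  assert (D : forall x w, term_mentions k1 w = false -> term_mentions k2 w = false ->
            sat M (upd r k1 x) (f_dvd (tvar k1) w k2) <-> dvd x (eval M r w)).
  { intros x w Hw1 Hw2. rewrite sat_f_dvd by (simpl; first [assumption | now rewrite Nat.eqb_sym]).
    cbn [eval]. now rewrite upd_same, eval_upd_unmentioned. }
  split; intros G d Hd.
  - specialize (G d Hd). rewrite !D in G by assumption. cbn [eval] in G.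
    rewrite upd_same in G. auto.
  - rewrite !D by assumption. cbn [eval]. rewrite upd_same. intros [Hu Hv]. auto.
Qed.

Lemma sat_f_rad_prod r : is_rad (r 0 ⊗ r 1 ⊗ r 2) (r 3) ->
  sat M r (f_rad (tmul (tmul (tvar 0) (tvar 1)) (tvar 2)) (tvar 3) 10 11 12).
Proof.
  intros [Hsq [Hdvd Hprimes]]. unfold f_rad, f_squarefree. cbn [sat].
  split; [|split].
  - intros k Hk HD. rewrite sat_f_dvd in HD by reflexivity. cbn [eval upd Nat.eqb] in *. auto.
  - rewrite sat_f_dvd by reflexivity. cbn [eval upd Nat.eqb] in *. auto.
  - intros k Hk [HP HD]. rewrite sat_f_prime in HP by reflexivity.
    rewrite sat_f_dvd in * by reflexivity. cbn [eval upd Nat.eqb] in *. auto.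
Qed.

(* The least t >= 1 with p | t b divides every such t, in particular p and a. *)
Lemma prime_dvd_mul p a b : is_prime p -> dvd p (a ⊗ b) -> dvd p a \/ dvd p b.
Proof.
  intros Hp Hab. destruct (classic (a = 0')) as [-> | Ha]; [left; apply dvd_0|].
  destruct (delta0_least_number (fand (fle tone (tvar 0)) (f_dvd (tvar 1) (tmul (tvar 0) (tvar 2)) 3))
              (params p b 0') (fun t => 1' ≤ t /\ dvd p (t ⊗ b)))
    as [t0 [[Ht0 Ht0b] Hmin]].
  - repeat constructor.
  - reflexivity.
  - intro d. cbn [sat]. rewrite sat_f_dvd by reflexivity. reflexivity.
  - exists a. split; [now apply neq_0_ge_1 | exact Hab].
  - assert (Hdiv : forall t, 1' ≤ t -> dvd p (t ⊗ b) -> dvd t0 t).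
    { intros t Ht Htb. destruct (div_mod t t0 (ge_1_neq_0 _ Ht0)) as [q [r [Et Hr]]].
      assert (Hrb : dvd p (r ⊗ b)).
      { apply (dvd_add_cancel_l _ (q ⊗ (t0 ⊗ b))); [|now apply dvd_mul_l].
        replace (q ⊗ (t0 ⊗ b) ⊕ r ⊗ b) with (t ⊗ b) by (rewrite Et; ring). exact Htb. }
      destruct (classic (r = 0')) as [-> | Hr0].
      - exists q. rewrite Et. ring.
      - exfalso. apply (Hmin r Hr). split; [now apply neq_0_ge_1 | exact Hrb]. }
    assert (Ht0p : dvd t0 p) by (apply Hdiv; [now apply lt_le, Hp | now apply dvd_mul_r, dvd_refl]).
    destruct Hp as [Hp1 Hp2].
    destruct (Hp2 t0 (dvd_le _ _ Ht0p (gt_1_neq_0 _ Hp1)) Ht0p) as [-> | ->].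
    + right. now rewrite mul_1_l in Ht0b.
    + left. apply Hdiv; [now apply neq_0_ge_1 | exact Hab].
Qed.

Lemma prime_dvd_pow p x n : is_prime p -> dvd p (pow x n) -> dvd p x.
Proof.
  intro Hp. induction n as [|n IH]; simpl; intro H.
  - apply dvd_1 in H. subst. destruct Hp as [[_ Hne] _]. now contradiction Hne.
  - destruct (prime_dvd_mul _ _ _ Hp H) as [H1 | H1]; [exact (IH H1) | exact H1].
Qed.

(* rad N is the least R >= 1 dividing N and divisible by its prime divisors;
   minimality forces it to be squarefree. *)
Lemma rad_le_prime_cover N C : N <> 0' -> 1' ≤ C -> dvd C N ->
  (forall p, is_prime p -> dvd p N -> dvd p C) -> exists R, is_rad N R /\ R ≤ C.
Proof.
  intros HN HC1 HCN HCp.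
  destruct (delta0_least_number
              (fand (fle tone (tvar 0)) (fand (f_dvd (tvar 0) (tvar 1) 5)
                 (fball 2 (tvar 1) (fimp (fand (f_prime (tvar 2) 3 4) (f_dvd (tvar 2) (tvar 1) 3))
                                         (f_dvd (tvar 2) (tvar 0) 3)))))
              (params N 0' 0')
              (fun r => 1' ≤ r /\ dvd r N /\ forall p, p ≤ N -> is_prime p /\ dvd p N -> dvd p r))
    as [R [[HR1 [HRN HRp]] Hmin]].
  - repeat constructor.
  - reflexivity.
  - intro d. cbn [sat]. rewrite sat_f_dvd by reflexivity. cbn [eval params upd Nat.eqb].
    split; intros [h1 [h2 h3]]; split; auto; split; auto; intros p Hp; specialize (h3 p Hp);
      rewrite sat_f_prime, !sat_f_dvd in * by reflexivity; cbn [eval params upd Nat.eqb] in *; auto.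
  - exists C. split; [exact HC1|]. split; [exact HCN|]. intros p _ [Hp HpN]. auto.
  - exists R. split; [split; [|split; assumption] | ].
    + intros k Hk [t Ht]. apply NNPP. intro Hk1.
      assert (HR0 := ge_1_neq_0 _ HR1).
      assert (Hk0 : k <> 0') by (intros ->; apply HR0; rewrite <- Ht; ring).
      assert (Hkt : k ⊗ t <> 0') by (intro E; apply HR0; rewrite <- Ht, <- mul_assoc, E; ring).
      assert (Hk2 : 1' ⊕ 1' ≤ k).
      { apply (lt_succ_l 1' k). split; [now apply neq_0_ge_1 | intro E; now apply Hk1]. }
      apply (Hmin (k ⊗ t)).
      * apply lt_succ_l. rewrite <- Ht. apply le_trans with ((1' ⊕ 1') ⊗ (k ⊗ t)).
        -- replace ((1' ⊕ 1') ⊗ (k ⊗ t)) with (k ⊗ t ⊕ k ⊗ t) by ring.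
           apply add_le_mono; [apply le_refl | now apply neq_0_ge_1].
        -- rewrite <- mul_assoc. apply mul_le_mono; [exact Hk2 | apply le_refl].
      * split; [now apply neq_0_ge_1|]. split.
        -- apply dvd_trans with R; [exists k; rewrite <- Ht; ring | exact HRN].
        -- intros p Hp [Hpp HpN]. assert (Hpkkt : dvd p (k ⊗ (k ⊗ t))) by (rewrite mul_assoc, Ht; auto).
           destruct (prime_dvd_mul _ _ _ Hpp Hpkkt) as [H | H]; [now apply dvd_mul_r | exact H].
    + apply not_lt. intro H. apply (Hmin C H). split; [exact HC1|]. split; [exact HCN|].
      intros p _ [Hp HpN]. auto.
Qed.

Lemma abc_in_model K : (forall r, sat M r (abc_sentence K)) -> forall a b c R,
  0' < a -> 0' < b -> a ⊕ b = c -> coprime a b -> coprime a c -> coprime b c ->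
  is_rad (a ⊗ b ⊗ c) R -> c ⊗ c ⊗ c < num (K * K * K) ⊗ (R ⊗ R ⊗ R ⊗ R).
Proof.
  intros H a b c R Ha Hb Hc Hab Hac Hbc HR. specialize (H (fun _ => 0')).
  cbn [abc_sentence sat] in H. specialize (H a b c R).
  rewrite !sat_f_lt, !sat_f_coprime in H by reflexivity.
  cbn [eval] in H. rewrite eval_tnum in H. cbn [upd Nat.eqb] in H.
  apply H. repeat (split; [assumption|]). now apply sat_f_rad_prod.
Qed.

Definition rem_is (u m w : M) : Prop := (exists q, q ≤ u /\ u = q ⊗ m ⊕ w) /\ w < m.

(* The literal reading of f_exp, so that it is what sat computes by conversion. *)
Definition exp_graph (x y z : M) : Prop :=
  exists u v, rem_is u (1' ⊕ (0' ⊕ 1') ⊗ v) 1' /\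
   (forall i, i ≤ y -> i < y -> exists w1, w1 ≤ u /\ exists w2, w2 ≤ u /\
      rem_is u (1' ⊕ (i ⊕ 1') ⊗ v) w1 /\ rem_is u (1' ⊕ (i ⊕ 1' ⊕ 1') ⊗ v) w2 /\ w2 = w1 ⊗ x) /\
   rem_is u (1' ⊕ (y ⊕ 1') ⊗ v) z.

Lemma catalan_in_model : (forall r, sat M r catalan_sentence) -> forall x y a b z w,
  1' < x -> 1' < y -> 1' < a -> 1' < b -> exp_graph x a z -> exp_graph y b w -> z = w ⊕ 1' ->
  x = num 3 /\ a = num 2 /\ y = num 2 /\ b = num 3.
Proof.
  intros H x y a b z w Hx Hy Ha Hb Hz Hw Hzw. specialize (H (fun _ => 0')).
  cbn [catalan_sentence sat] in H. specialize (H x y a b z w). rewrite !sat_f_lt in H. cbn [eval] in H. rewrite !eval_tnum in H.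
  cbn [upd Nat.eqb] in H. now apply H.
Qed.

Lemma common_multiple_upto N : exists v, 1' ≤ v /\ forall j, j ≤ N -> 1' ≤ j -> dvd j v.
Proof.
  revert N.
  refine (sigma1_induction 0
            (fex 1 (fand (fle tone (tvar 1))
                         (fball 2 (tvar 0) (fimp (fle tone (tvar 2)) (f_dvd (tvar 2) (tvar 1) 3)))))
            (params 0' 0' 0') _ _ _ _ _).
  - repeat apply s1_ex; apply s1_d0; repeat constructor.
  - intro d. cbn [sat]. split; intros [v [Hv1 Hv2]]; exists v; split; auto; intros j Hj;
      specialize (Hv2 j Hj); rewrite sat_f_dvd in * by reflexivity; cbn [eval params upd Nat.eqb] in *; auto.
  - exists 1'. split; [apply le_refl|]. intros j Hj%le_0_r Hj1. now destruct (ge_1_neq_0 _ Hj1).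
  - intros d [v [Hv1 Hv2]]. exists (v ⊗ (d ⊕ 1')). split.
    + apply neq_0_ge_1, mul_neq_0; [now apply ge_1_neq_0 | apply succ_neq_0].
    + intros j Hj Hj1. destruct (le_succ_r _ _ Hj) as [H | ->].
      * now apply dvd_mul_r, Hv2.
      * apply dvd_mul_l, dvd_refl.
Qed.

Section BetaFunction.

Variable x : M.
Hypothesis Hx : x <> 0'.
Variable n : nat.
Variable v : M.
Hypothesis Hv1 : 1' ≤ v.
Hypothesis Hv2 : forall j, j ≤ pow x n ⊕ num n -> 1' ≤ j -> dvd j v.

Definition beta_modulus (i : nat) : M := 1' ⊕ (num i ⊕ 1') ⊗ v.

Lemma beta_modulus_neq_0 i : beta_modulus i <> 0'.
Proof. unfold beta_modulus. rewrite add_comm. apply succ_neq_0. Qed.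

Lemma pow_lt_beta_modulus i : (i <= n)%nat -> pow x i < beta_modulus i.
Proof.
  intro Hi. unfold beta_modulus. rewrite add_comm. apply le_lt_succ, le_trans with v.
  - apply le_trans with (pow x n); [now apply pow_le_mono_r|].
    apply le_trans with (pow x n ⊕ num n); [apply le_add_r|].
    apply dvd_le; [apply Hv2; [apply le_refl|] | now apply ge_1_neq_0].
    apply le_trans with (pow x n); [now apply neq_0_ge_1, pow_neq_0 | apply le_add_r].
  - rewrite mul_comm. apply le_mul_r, succ_neq_0.
Qed.

(* Pairwise coprimality of the moduli as an explicit Bezout identity; it rests on j - i dividing v. *)
Lemma beta_modulus_bezout i j : (i < j)%nat -> (j <= n)%nat ->
  exists y h, beta_modulus i ⊗ y = 1' ⊕ h ⊗ beta_modulus j.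
Proof.
  intros Hij Hjn. set (t := (j - i)%nat).
  assert (Ht : dvd (num t) v).
  { apply Hv2.
    - apply le_trans with (num n); [apply num_le; unfold t; lia | apply le_add_l].
    - rewrite <- num_1. apply num_le. unfold t. lia. }
  destruct Ht as [w Hw].
  destruct (neq_0_succ v (ge_1_neq_0 _ Hv1)) as [v0 Hv0].
  assert (Ej : num j = num i ⊕ num t) by (rewrite <- num_add; f_equal; unfold t; lia).
  set (V := (num j ⊕ 1') ⊗ v).
  set (V0 := (num j ⊕ 1') ⊗ v0 ⊕ num j).
  set (W := w ⊗ (num j ⊕ 1')).
  exists ((num j ⊕ 1') ⊗ W ⊗ V), ((num i ⊕ 1') ⊗ W ⊗ V ⊕ V0).
  assert (E1 : (num j ⊕ 1') ⊗ beta_modulus i = (num i ⊕ 1') ⊗ beta_modulus j ⊕ num t)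
    by (unfold beta_modulus; rewrite Ej; ring).
  assert (E2 : num t ⊗ W ⊗ V = V ⊗ V) by (unfold W, V; rewrite <- Hw; ring).
  assert (E3 : V ⊗ V = 1' ⊕ V0 ⊗ beta_modulus j) by (unfold V, V0, beta_modulus; rewrite Hv0; ring).
  transitivity (((num j ⊕ 1') ⊗ beta_modulus i) ⊗ W ⊗ V); [ring|].
  rewrite E1. transitivity ((num i ⊕ 1') ⊗ W ⊗ V ⊗ beta_modulus j ⊕ num t ⊗ W ⊗ V); [ring|].
  rewrite E2, E3. ring.
Qed.

Fixpoint beta_modulus_prod (k : nat) : M :=
  match k with
  | 0 => beta_modulus 0
  | S k => beta_modulus_prod k ⊗ beta_modulus (S k)
  end.

Lemma beta_modulus_prod_bezout k j : (k < j)%nat -> (j <= n)%nat ->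
  exists y h, beta_modulus_prod k ⊗ y = 1' ⊕ h ⊗ beta_modulus j.
Proof.
  induction k as [|k IH]; intros Hk Hj; [now apply beta_modulus_bezout|].
  destruct IH as [y1 [h1 E1]]; [lia | exact Hj|].
  destruct (beta_modulus_bezout (S k) j) as [y2 [h2 E2]]; [exact Hk | exact Hj|].
  exists (y1 ⊗ y2), (h1 ⊕ h2 ⊕ h1 ⊗ h2 ⊗ beta_modulus j). simpl.
  transitivity ((beta_modulus_prod k ⊗ y1) ⊗ (beta_modulus (S k) ⊗ y2)); [ring|].
  rewrite E1, E2. ring.
Qed.

Lemma beta_modulus_dvd_prod i k : (i <= k)%nat -> dvd (beta_modulus i) (beta_modulus_prod k).
Proof.
  induction k as [|k IH]; intro Hik.
  - replace i with 0%nat by lia. apply dvd_refl.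
  - simpl. destruct (Nat.eq_dec i (S k)) as [-> | Hne].
    + apply dvd_mul_l, dvd_refl.
    + apply dvd_mul_r, IH. lia.
Qed.

Lemma chinese_remainder_powers k : (k <= n)%nat ->
  exists u, forall i, (i <= k)%nat -> exists q, u = q ⊗ beta_modulus i ⊕ pow x i.
Proof.
  induction k as [|k IH]; intro Hk.
  - exists 1'. intros i Hi. replace i with 0%nat by lia. exists 0'. simpl. ring.
  - destruct IH as [u Hu]; [lia|].
    destruct (div_mod u (beta_modulus (S k)) (beta_modulus_neq_0 _)) as [q [r [Eu Hr]]].
    destruct (proj1 (le_exists_add _ _) (lt_le _ _ Hr)) as [s Hs].
    destruct (beta_modulus_prod_bezout k (S k)) as [y [h Ey]]; [lia | exact Hk|].
    set (c := pow x (S k)).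
    exists (u ⊕ beta_modulus_prod k ⊗ (y ⊗ (c ⊕ s))).
    intros i Hi. destruct (Nat.eq_dec i (S k)) as [-> | Hne].
    + exists (q ⊕ h ⊗ (c ⊕ s) ⊕ 1'). fold c.
      transitivity (u ⊕ (beta_modulus_prod k ⊗ y) ⊗ (c ⊕ s)); [ring|].
      rewrite Ey, Eu, <- Hs. ring.
    + destruct (Hu i) as [qi Ei]; [lia|].
      destruct (beta_modulus_dvd_prod i k) as [l El]; [lia|].
      exists (qi ⊕ l ⊗ (y ⊗ (c ⊕ s))). rewrite Ei, <- El. ring.
Qed.

Lemma rem_is_beta_modulus u i : (i <= n)%nat ->
  (exists q, u = q ⊗ beta_modulus i ⊕ pow x i) ->
  rem_is u (beta_modulus i) (pow x i) /\ pow x i ≤ u.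
Proof.
  intros Hi [q ->]. split; [split|].
  - exists q. split; [|reflexivity]. apply le_trans with (q ⊗ beta_modulus i).
    + apply le_mul_r, beta_modulus_neq_0.
    + apply le_add_r.
  - now apply pow_lt_beta_modulus.
  - apply le_add_l.
Qed.

Lemma exp_graph_pow_of_modulus : exp_graph x (num n) (pow x n).
Proof.
  destruct (chinese_remainder_powers n (le_n n)) as [u Hu]. exists u, v.
  split; [|split].
  - exact (proj1 (rem_is_beta_modulus u 0 (Nat.le_0_l n) (Hu 0%nat (Nat.le_0_l n)))).
  - intros i _ Hi. destruct (lt_num i n Hi) as [j [Hj ->]].
    destruct (rem_is_beta_modulus u j ltac:(lia) (Hu j ltac:(lia))) as [R1 L1].
    destruct (rem_is_beta_modulus u (S j) ltac:(lia) (Hu (S j) ltac:(lia))) as [R2 L2].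
    exists (pow x j). split; [exact L1|]. exists (pow x (S j)). split; [exact L2|].
    split; [exact R1|]. split; [exact R2 | reflexivity].
  - exact (proj1 (rem_is_beta_modulus u n (le_n n) (Hu n (le_n n)))).
Qed.

End BetaFunction.

Lemma exp_graph_pow x n : x <> 0' -> exp_graph x (num n) (pow x n).
Proof.
  intro Hx. destruct (common_multiple_upto (pow x n ⊕ num n)) as [v [Hv1 Hv2]].
  exact (exp_graph_pow_of_modulus x Hx n v Hv1 Hv2).
Qed.

Definition radical_cover (V C : M) : Prop :=
  1' ≤ C /\ dvd C V /\ (forall p, is_prime p -> dvd p V -> dvd p C) /\ pow C 2 ≤ V.

Lemma radical_cover_pow g m : 1' < g -> (2 <= m)%nat -> radical_cover (pow g m) g.
Proof.
  intros Hg Hm. assert (Hg0 := gt_1_neq_0 _ Hg). split; [|split; [|split]].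
  - now apply lt_le.
  - destruct m as [|m]; [lia|]. apply dvd_mul_l, dvd_refl.
  - intros p Hp H. exact (prime_dvd_pow _ _ _ Hp H).
  - now apply pow_le_mono_r.
Qed.

Lemma radical_cover_pow4_le V C : radical_cover V C -> pow C 4 ≤ V ⊗ V.
Proof. intros [_ [_ [_ H]]]. change 4%nat with (2 + 2)%nat. rewrite pow_add_r. now apply mul_le_mono. Qed.

Lemma rad_le_radical_covers z w Cz Cw : z <> 0' -> w <> 0' ->
  radical_cover z Cz -> radical_cover w Cw -> exists R, is_rad (1' ⊗ w ⊗ z) R /\ R ≤ Cw ⊗ Cz.
Proof.
  intros Hz Hw [Cz1 [Czz [Czp _]]] [Cw1 [Cww [Cwp _]]].
  apply rad_le_prime_cover.
  - rewrite mul_1_l. now apply mul_neq_0.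
  - apply neq_0_ge_1, mul_neq_0; now apply ge_1_neq_0.
  - destruct Czz as [k1 <-], Cww as [k2 <-]. exists (k2 ⊗ k1). ring.
  - intros p Hp H. rewrite mul_1_l in H.
    destruct (prime_dvd_mul _ _ _ Hp H) as [H1 | H1]; [apply dvd_mul_r | apply dvd_mul_l]; auto.
Qed.

(* With R = rad(wz) <= Cw Cz, the abc sentence gives z^3 < K^3 R^4 <= K^3 Cw^4 Cz^4 <= z^3. *)
Lemma abc_forbids_small_radical K z w Cz Cw : (forall r, sat M r (abc_sentence K)) ->
  w <> 0' -> z = w ⊕ 1' -> radical_cover z Cz -> radical_cover w Cw ->
  num (K * K * K) ⊗ pow Cz 4 ≤ z \/ num (K * K * K) ⊗ pow Cw 4 ≤ w -> False.
Proof.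
  intros Habc Hw Ez Iz Iw Hsmall. set (K3 := num (K * K * K)).
  assert (Hz : z <> 0') by (rewrite Ez; apply succ_neq_0).
  destruct (rad_le_radical_covers z w Cz Cw Hz Hw Iz Iw) as [R [HR HRle]].
  assert (Hcop1 : forall u, coprime 1' u) by (intros u d _ H1 _; now apply dvd_1).
  assert (Hcop : coprime w z).
  { intros d _ Hdw Hdz. apply dvd_1, (dvd_add_cancel_l _ w); [now rewrite <- Ez | exact Hdw]. }
  assert (Habc_wz := abc_in_model K Habc 1' w z R lt_0_1
                       (conj (le_0_l w) (fun E => Hw (eq_sym E)))
                       (eq_sym (eq_trans Ez (add_comm _ _))) (Hcop1 w) (Hcop1 z) Hcop HR).
  apply (lt_not_le _ _ Habc_wz).
  assert (HRpow : K3 ⊗ (R ⊗ R ⊗ R ⊗ R) ≤ K3 ⊗ pow Cw 4 ⊗ pow Cz 4).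
  { replace (K3 ⊗ pow Cw 4 ⊗ pow Cz 4) with (K3 ⊗ pow (Cw ⊗ Cz) 4) by (rewrite pow_mul_l; ring).
    apply mul_le_mono; [apply le_refl|].
    replace (R ⊗ R ⊗ R ⊗ R) with (pow R 4) by (simpl; ring). now apply pow_le_mono_l. }
  apply (le_trans _ _ _ HRpow).
  assert (Hwz : w ≤ z) by (rewrite Ez; apply le_add_r).
  assert (Pz := radical_cover_pow4_le _ _ Iz). assert (Pw := radical_cover_pow4_le _ _ Iw).
  destruct Hsmall as [Hl | Hl].
  - replace (K3 ⊗ pow Cw 4 ⊗ pow Cz 4) with ((K3 ⊗ pow Cz 4) ⊗ pow Cw 4) by ring.
    replace (z ⊗ z ⊗ z) with (z ⊗ (z ⊗ z)) by ring.
    apply mul_le_mono; [exact Hl|]. apply le_trans with (w ⊗ w); [exact Pw|].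
    now apply mul_le_mono.
  - replace (K3 ⊗ pow Cw 4 ⊗ pow Cz 4) with ((K3 ⊗ pow Cw 4) ⊗ pow Cz 4) by ring.
    replace (z ⊗ z ⊗ z) with (z ⊗ (z ⊗ z)) by ring.
    apply mul_le_mono; [exact (le_trans _ _ _ Hl Hwz) | exact Pz].
Qed.

Section ExpPrimeModel.

Variable inA : M -> Prop.
Variable e : M -> M -> M.
Hypothesis HE : ExpPrime M inA e.

Lemma inA_0 : inA 0'.
Proof. destruct HE as [[H _] _]; auto. Qed.

Lemma inA_1 : inA 1'.
Proof. destruct HE as [[_ [H _]] _]; auto. Qed.

Lemma inA_add x y : inA x -> inA y -> inA (x ⊕ y).
Proof. destruct HE as [[_ [_ [H _]]] _]; auto. Qed.

Lemma inA_le_exists_add x y : inA x -> inA y -> x ≤ y -> exists z, inA z /\ x ⊕ z = y.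
Proof. destruct HE as [[_ [_ [_ [_ [_ [_ [_ [_ [_ [_ [H _]]]]]]]]]]] _]. intros. now apply H. Qed.

Lemma inA_div n x : (0 < n)%nat -> inA x ->
  exists y, inA y /\ nsum M n y ≤ x /\ x < nsum M n (y ⊕ 1').
Proof. destruct HE as [[_ [_ [_ [_ [_ [_ [_ [_ [_ [_ [_ H]]]]]]]]]]] _]; auto. Qed.

Lemma e_0 x : e x 0' = 1'.
Proof. destruct HE as [_ [H _]]. apply H; [exact inA_0 | now right]. Qed.

Lemma e_neq_0 x y : inA y -> x <> 0' -> e x y <> 0'.
Proof. destruct HE as [_ [_ [H _]]]; auto. Qed.

Lemma e_1 x : e x 1' = x.
Proof. destruct HE as [_ [_ [_ [H _]]]]; auto. Qed.

Lemma e_add x y z : inA y -> inA z -> e x (y ⊕ z) = e x y ⊗ e x z.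
Proof. destruct HE as [_ [_ [_ [_ H]]]]; auto. Qed.

Lemma inA_num n : inA (num n).
Proof. induction n; simpl; [exact inA_0 | now apply inA_add, inA_1]. Qed.

Lemma e_num x n : e x (num n) = pow x n.
Proof.
  induction n as [|n IH]; simpl; [apply e_0|].
  now rewrite e_add, IH, e_1 by first [apply inA_num | apply inA_1].
Qed.

Lemma inA_nsum n q : inA q -> inA (nsum M n q).
Proof. intro Hq. induction n; simpl; [exact inA_0 | now apply inA_add]. Qed.

Lemma e_nsum x n q : inA q -> e x (nsum M n q) = pow (e x q) n.
Proof.
  intro Hq. induction n as [|n IH]; simpl; [apply e_0|].
  now rewrite e_add, IH by first [assumption | now apply inA_nsum].
Qed.

Lemma inA_div_16 s : inA s -> exists q j, inA q /\ (j < 16)%nat /\ s = nsum M 16 q ⊕ num j.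
Proof.
  intro Hs. destruct (inA_div 16 s ltac:(lia) Hs) as [q [Hq [Hqs Hsq]]].
  destruct (inA_le_exists_add _ _ (inA_nsum 16 q Hq) Hs Hqs) as [r [Hr Er]].
  assert (Hr16 : r < num 16).
  { rewrite !nsum_num_mul in *. apply lt_succ_l, (add_le_cancel_r _ _ (num 16 ⊗ q)).
    apply lt_succ_l in Hsq. rewrite <- Er in Hsq.
    replace (r ⊕ 1' ⊕ num 16 ⊗ q) with (num 16 ⊗ q ⊕ r ⊕ 1') by ring.
    replace (num 16 ⊕ num 16 ⊗ q) with (num 16 ⊗ (q ⊕ 1')) by ring. exact Hsq. }
  destruct (lt_num _ _ Hr16) as [j [Hj ->]]. now exists q, j.
Qed.

(* Writing s = 16 q + j with q > K3 and X := e(g, q), we get e(g, s) = X^16 g^j,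
   so C := X g has the prime divisors of e(g, s) while C^4 and K3 are at most X^8. *)
Lemma e_large_exponent_small_radical K3 g q j : 1' < g -> inA q -> num (S K3) ≤ q ->
  let V := e g (nsum M 16 q ⊕ num j) in
  exists C, radical_cover V C /\ num K3 ⊗ pow C 4 ≤ V.
Proof.
  intros Hg Hq Hq3 V. assert (Hg0 := gt_1_neq_0 _ Hg).
  destruct (inA_le_exists_add _ _ (inA_num (S K3)) Hq Hq3) as [q2 [Hq2 Eq2]].
  set (X := e g q). set (T := pow g K3 ⊗ e g q2).
  assert (HT : T <> 0') by (apply mul_neq_0; [now apply pow_neq_0 | now apply e_neq_0]).
  assert (EX : X = g ⊗ T).
  { unfold X, T. rewrite <- Eq2, e_add, e_num by first [assumption | apply inA_num]. simpl. ring. }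
  assert (HX : X <> 0') by (rewrite EX; now apply mul_neq_0).
  assert (HgX : g ≤ X) by (rewrite EX; apply le_mul_r, HT).
  assert (EV : V = pow X 16 ⊗ pow g j).
  { unfold V. rewrite e_add, e_nsum, e_num by first [assumption | apply inA_num | now apply inA_nsum].
    reflexivity. }
  assert (HX16 : pow X 16 = pow X 8 ⊗ pow X 8) by (rewrite <- pow_add_r; reflexivity).
  assert (HK3 : num K3 ≤ pow X 8).
  { apply le_trans with (pow g K3); [now apply lt_le, num_lt_pow|].
    apply le_trans with X; [|rewrite <- (pow_1 X) at 1; apply pow_le_mono_r; [exact HX | lia]].
    rewrite EX. unfold T. rewrite mul_comm, <- mul_assoc.
    apply le_mul_r, mul_neq_0; [now apply e_neq_0 | exact Hg0]. }
  assert (HC4 : pow (X ⊗ g) 4 ≤ pow X 8).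
  { apply le_trans with (pow (X ⊗ X) 4); [apply pow_le_mono_l, mul_le_mono; [apply le_refl | exact HgX]|].
    rewrite pow_mul_l, <- pow_add_r. apply le_refl. }
  assert (HV16 : pow X 16 ≤ V) by (rewrite EV; apply le_mul_r, pow_neq_0, Hg0).
  exists (X ⊗ g). split; [split; [|split; [|split]] |].
  - apply neq_0_ge_1, mul_neq_0; assumption.
  - exists (T ⊗ pow X 14 ⊗ pow g j).
    rewrite EV. change 16%nat with (2 + 14)%nat. rewrite pow_add_r.
    transitivity (X ⊗ (g ⊗ T) ⊗ pow X 14 ⊗ pow g j); [ring|].
    rewrite <- EX. simpl (pow X 2). ring.
  - intros p Hp Hd. rewrite EV in Hd. destruct (prime_dvd_mul _ _ _ Hp Hd) as [H | H].
    + apply dvd_mul_r. exact (prime_dvd_pow _ _ _ Hp H).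
    + apply dvd_mul_l. exact (prime_dvd_pow _ _ _ Hp H).
  - apply le_trans with (pow (X ⊗ g) 4); [apply pow_le_mono_r; [now apply mul_neq_0 | lia]|].
    apply (le_trans _ _ _ HC4), (le_trans _ (pow X 16)); [|exact HV16].
    rewrite HX16. apply le_mul_r, pow_neq_0, HX.
  - apply le_trans with (pow X 8 ⊗ pow X 8); [now apply mul_le_mono|]. now rewrite <- HX16.
Qed.

Lemma e_standard_or_small_radical K3 g s : 1' < g -> inA s -> 1' < s ->
  (exists m, (2 <= m)%nat /\ s = num m /\ e g s = pow g m) \/
  (exists C, radical_cover (e g s) C /\ num K3 ⊗ pow C 4 ≤ e g s).
Proof.
  intros Hg Hs Hs1. destruct (inA_div_16 s Hs) as [q [j [Hq [Hj ->]]]].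
  destruct (classic (q ≤ num K3)) as [HqK | HqK].
  - left. destruct (le_num _ _ HqK) as [i [_ ->]].
    assert (Es : nsum M 16 (num i) ⊕ num j = num (16 * i + j))
      by now rewrite nsum_num_mul, num_add, num_mul.
    rewrite Es in *. exists (16 * i + j)%nat. split; [|split; [reflexivity | apply e_num]].
    apply num_le_inv. cbn [num]. rewrite add_0_l. exact (proj1 (lt_succ_l _ _) Hs1).
  - right. apply e_large_exponent_small_radical; [exact Hg | exact Hq|].
    apply (proj1 (lt_succ_l (num K3) q)). apply NNPP. intro H. exact (HqK (not_lt _ _ H)).
Qed.

Lemma catalan_for_e K : (forall r, sat M r (abc_sentence K)) ->
  (forall r, sat M r catalan_sentence) -> CatalanFor M inA e.
Proof.
  intros Habc Hcat x y a b Ha Hb Hx Hy Ha1 Hb1 Hxy.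
  assert (Hw : e y b <> 0') by (apply e_neq_0; [exact Hb | exact (gt_1_neq_0 _ Hy)]).
  destruct (e_standard_or_small_radical (K * K * K) x a Hx Ha Ha1) as [[m [Hm [Ea Ez]]] | [Cz [Iz Lz]]];
  destruct (e_standard_or_small_radical (K * K * K) y b Hy Hb Hb1) as [[n [Hn [Eb Ew]]] | [Cw [Iw Lw]]].
  - rewrite <- num_2, <- num_3.
    apply (catalan_in_model Hcat x y a b (e x a) (e y b)); auto.
    + rewrite Ez, Ea. exact (exp_graph_pow _ _ (gt_1_neq_0 _ Hx)).
    + rewrite Ew, Eb. exact (exp_graph_pow _ _ (gt_1_neq_0 _ Hy)).
  - exfalso. apply (abc_forbids_small_radical K _ _ x Cw Habc Hw Hxy); [|exact Iw | now right].
    rewrite Ez. now apply radical_cover_pow.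
  - exfalso. apply (abc_forbids_small_radical K _ _ Cz y Habc Hw Hxy); [exact Iz | |now left].
    rewrite Ew. now apply radical_cover_pow.
  - exfalso. exact (abc_forbids_small_radical K _ _ Cz Cw Habc Hw Hxy Iz Iw (or_introl Lz)).
Qed.

End ExpPrimeModel.

End ISigma1Model.

Theorem proposition5p4 :
  forall (S : theory) (K : nat),
    ExtendsISigma1 S ->
    Proves S (abc_sentence K) ->
    Proves S catalan_sentence ->
    forall (B : Lstr) (inA : B -> Prop) (e : B -> B -> B),
      Model S B ->
      ExpPrime B inA e ->
      CatalanFor B inA e.
Proof.
  intros S K HS Habc Hcat B inA e HB HE.
  exact (catalan_for_e B (HS B HB) inA e HE K (Habc B HB) (Hcat B HB)).
Qed.
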